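(* Let $\varSigma$ be a finite alphabet, $d=|\varSigma|$, $N\ge1$, and $S=\{i\in\mathbb{Z}^d: i_\ell\ge0\ \forall\ell\in\varSigma,\ \sum_\ell i_\ell=N\}$. Let $(w_{\ell m})_{\ell,m\in\varSigma}$ be an irreducible Markov generator on $\varSigma$ that is reversible with respect to a distribution $\gamma$ on $\varSigma$. Let $\mathfrak{S}=\{e_m-e_\ell: m,\ell\in\varSigma, m\neq\ell\}$ and for $z\in\mathbb{R}^d$ define $U_k(z)=w_{\ell m}z_\ell$ if $k=e_m-e_\ell\in\mathfrak{S}$, $U_0(z)=-\sum_{\ell\ne m}w_{\ell m}z_\ell$, and $U_k(z)=0$ otherwise. Let $\boldsymbol{U}=(U_{ij})_{i,j\in S}$ with $U_{ij}=U_{j-i}(i)$, and let $R_i=R(i)$ with $R(z)=r\cdot z$ for some $r\in\mathbb{R}^d$. Then for every $z\in\mathrm{rint\,conv}\,S=\{z\in\mathbb{R}^d: z_\ell>0\ \forall\ell,\ \sum_\ell z_\ell=N\}$, \[ \Lambda(z)=R(z)-\frac12\sum_{k\in\mathfrak{S}}\Big(\sqrt{U_k(z)}-\sqrt{U_{-k}(z)}\Big)^2=\langle\nu^{(z)},R\rangle-I_{\boldsymbol{U}}(\nu^{(z)}), \] where $\nu^{(z)}=\mathrm{Mult}_{N,z/N}$ is the multinomial distribution with mean $z$, and \[ \Lambda(z):=\max_{\nu\in\mathsf{P}(S):\ \sum_i\nu_i i=z}\big[\langle\nu,R\rangle-I_{\boldsymbol{U}}(\nu)\big]. \]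
   Context: $e_\ell$ denotes the unit vector in $\mathbb{R}^d$ with coordinate $\ell$ equal to $1$ (coordinates indexed by $\varSigma$). $\mathsf{P}(S)$ is the set of probability vectors on $S$, $\langle\nu,f\rangle=\sum_i\nu_if_i$, and $I_{\boldsymbol{U}}(\nu):=\sup_{v\in(0,\infty)^S}[-\sum_i\nu_i(\boldsymbol{U}v)_i/v_i]$. $\mathrm{Mult}_{N,p}$ is the multinomial distribution of $N$ samples from the distribution $p$ on $\varSigma$, regarded as a probability vector on $S$. *)

From HB Require Import structures.
From mathcomp Require Import all_boot all_order all_algebra.
From mathcomp Require Import boolp classical_sets reals constructive_ereal ereal.
Set Implicit Arguments. Unset Strict Implicit. Unset Printing Implicit Defensive.
Import Order.TTheory GRing.Theory Num.Theory.
Local Open Scope ring_scope.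
Local Open Scope classical_set_scope.

Section Defs.
Variables (R : realType) (Sigma : finType).

Definition stateS (N : nat) :=
  {i : {ffun Sigma -> 'I_N.+1} | (\sum_l (i l : nat))%N == N}.

Definition scoord N (i : stateS N) (l : Sigma) : nat := val i l.
Definition sreal N (i : stateS N) : Sigma -> R := fun l => (scoord i l)%:R.

Definition evec (l : Sigma) : {ffun Sigma -> int} := [ffun x => ((x == l) : nat)%:Z].

Definition sdiff N (j i : stateS N) : {ffun Sigma -> int} :=
  [ffun l => (scoord j l)%:Z - (scoord i l)%:Z].

Definition generator (w : Sigma -> Sigma -> R) :=
  (forall l m, l != m -> 0 <= w l m) /\ (forall l, \sum_m w l m = 0).

Definition irreducible (w : Sigma -> Sigma -> R) :=
  forall l m, connect (fun a b => (a != b) && (0 < w a b)) l m.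

Definition distribution (g : Sigma -> R) :=
  (forall l, 0 <= g l) /\ \sum_l g l = 1.

Definition reversible (w : Sigma -> Sigma -> R) (g : Sigma -> R) :=
  forall l m, g l * w l m = g m * w m l.

(* For k <> 0 the sum below has at most one nonzero term, since
   the representation k = e_m - e_l with l <> m is unique. *)
Definition Uk (w : Sigma -> Sigma -> R) (k : {ffun Sigma -> int}) (z : Sigma -> R) : R :=
  if k == 0 then - \sum_(l : Sigma) \sum_(m : Sigma | l != m) w l m * z l
  else \sum_(l : Sigma) \sum_(m : Sigma | (l != m) && (k == evec m - evec l)) w l m * z l.

Definition Umat (w : Sigma -> Sigma -> R) N (i j : stateS N) : R :=
  Uk w (sdiff j i) (sreal i).

Definition Rlin (r : Sigma -> R) (z : Sigma -> R) : R := \sum_l r l * z l.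

Definition probS N (nu : stateS N -> R) :=
  (forall i, 0 <= nu i) /\ \sum_i nu i = 1.

Definition IU (w : Sigma -> Sigma -> R) N (nu : stateS N -> R) : \bar R :=
  ereal_sup [set ((- \sum_i nu i * (\sum_j Umat w i j * v j) / v i)%R)%:E
            | v in [set v : stateS N -> R | forall i, 0 < v i]].

Definition meanS N (nu : stateS N -> R) : Sigma -> R :=
  fun l => \sum_i nu i * sreal i l.

Definition objective (w : Sigma -> Sigma -> R) (r : Sigma -> R) N (nu : stateS N -> R)
  : \bar R := ((\sum_i nu i * Rlin r (sreal i))%:E - IU w nu)%E.

Definition Lambda (w : Sigma -> Sigma -> R) (r : Sigma -> R) N (z : Sigma -> R) : \bar R :=
  ereal_sup [set objective w r nu
            | nu in [set nu : stateS N -> R | probS nu /\ meanS nu = z]].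

Definition multinomial N (p : Sigma -> R) (i : stateS N) : R :=
  (N`!)%:R / (\prod_l ((scoord i l)`!)%:R) * \prod_l p l ^+ scoord i l.

(* R(z) - 1/2 sum_{k in frak S} (sqrt U_k(z) - sqrt U_{-k}(z))^2 ;
   frak S = { e_m - e_l : m <> l } is in bijection with pairs (l,m), l <> m. *)
Definition closed_form (w : Sigma -> Sigma -> R) (r : Sigma -> R) (z : Sigma -> R) : R :=
  Rlin r z - 2^-1 * \sum_(l : Sigma) \sum_(m : Sigma | l != m)
     (Num.sqrt (Uk w (evec m - evec l) z) - Num.sqrt (Uk w (evec l - evec m) z)) ^+ 2.

End Defs.

(* For a test function [v > 0], the Donsker-Varadhan functional
   [- sum_i nu_i (U v)_i / v_i] is a sum over the jumps [i -> i + e_m - e_l], each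
   weighted by [w_lm i_l (1 - v (i + e_m - e_l) / v i)].
   Lower bound: if [nu] has mean [z], the product test function
   [v i = prod_k a_k ^ i_k] with [a_k = sqrt (z_k / gamma_k)] makes every ratio
   [v (i + e_m - e_l) / v i = a_m / a_l] independent of [i], so the functional only
   sees the mean of [nu], and reversibility turns it into the closed-form rate.
   Upper bound: the multinomial law [Mult_{N, z/N}] is in detailed balance for each
   pair of opposite jumps [l -> m] and [m -> l]; pairing them and applying AM-GM to
   [x = v (i + e_m - e_l) / v i] bounds the functional by the same rate for all [v].
   Since [<nu, R> = R(z)] for every [nu] with mean [z], the multinomial law attains
   the maximum defining [Lambda(z)]. *)

From HB Require Import structures.
From mathcomp Require Import all_boot all_order all_algebra.
From mathcomp Require Import boolp classical_sets reals constructive_ereal ereal.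
From mathcomp Require Import zify ring.
Set Implicit Arguments. Unset Strict Implicit. Unset Printing Implicit Defensive.
Import Order.TTheory GRing.Theory Num.Theory.
Local Open Scope ring_scope.

Lemma sum_nat_eq1 (T : finType) (a : T) : (\sum_k ((k == a) : nat))%N = 1%N.
Proof. by rewrite -big_mkcond /= sum1_card card1. Qed.

Section StateSpace.
Variables (Sigma : finType) (N : nat).
Local Notation S := (stateS Sigma N).

Lemma sum_scoord (i : S) : (\sum_l scoord i l)%N = N.
Proof. exact/eqP/(valP i). Qed.

Lemma scoord_addn_leq (i : S) l m : l != m -> (scoord i l + scoord i m <= N)%N.
Proof.
move=> lm; rewrite -{3}(sum_scoord i) (bigD1 l) //= (bigD1 m) 1?eq_sym //=.
by rewrite addnA leq_addr.
Qed.

Lemma scoord_leq (i : S) l : (scoord i l <= N)%N.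
Proof. by rewrite -ltnS; exact: ltn_ord. Qed.

(* [insubd] falls back to [i] when [scoord i l = 0]: [jump i l m] is only
   meaningful when [0 < scoord i l]. *)
Definition jump (i : S) l m : S :=
  insubd i [ffun k => inord (scoord i k + (k == m) - (k == l)) : 'I_N.+1].

Lemma jump_coord (i : S) l m k : l != m -> (0 < scoord i l)%N ->
  scoord (jump i l m) k = (scoord i k + (k == m) - (k == l))%N.
Proof.
move=> lm il.
have coordE k' : (inord (scoord i k' + (k' == m) - (k' == l)) : 'I_N.+1) =
    (scoord i k' + (k' == m) - (k' == l))%N :> nat.
  rewrite inordK // ltnS; have := scoord_addn_leq i lm; have := scoord_leq i k'.
  by case: (eqVneq k' m) => [->|_]; rewrite ?(negbTE lm) /=; lia.
rewrite /jump /scoord val_insubd ifT; first by rewrite ffunE coordE.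
have balance : (\sum_k' ([ffun k => inord (scoord i k + (k == m) - (k == l))] k' : 'I_N.+1)
    + \sum_k' ((k' == l) : nat) = \sum_k' scoord i k' + \sum_k' ((k' == m) : nat))%N.
  rewrite -!big_split; apply/eq_bigr => k' _ /=; rewrite ffunE coordE.
  by case: (eqVneq k' l) => [->|]; rewrite ?(negbTE lm) /=; lia.
by apply/eqP; move: balance; rewrite sum_scoord !sum_nat_eq1 => /addIn.
Qed.

Lemma jump_coord_to (i : S) l m : l != m -> (0 < scoord i l)%N ->
  scoord (jump i l m) m = (scoord i m).+1.
Proof. by move=> lm il; rewrite jump_coord // eqxx eq_sym (negbTE lm) subn0 addn1. Qed.

Lemma sdiff_evecB (i j : S) l m : l != m ->
  (sdiff j i == evec m - evec l) = (0 < scoord i l)%N && (j == jump i l m).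
Proof.
move=> lm; apply/eqP/andP => [/ffunP dji|[il /eqP ->]]; last first.
  apply/ffunP => k; rewrite !ffunE jump_coord //.
  by case: (eqVneq k l) => [->|]; rewrite ?(negbTE lm) /=; case: (k == m) => /=; lia.
have {}dji k : (scoord j k)%:Z - (scoord i k)%:Z = (k == m)%:Z - (k == l)%:Z.
  by have := dji k; rewrite !ffunE.
have il : (0 < scoord i l)%N by have := dji l; rewrite eqxx (negbTE lm); lia.
split=> //; apply/eqP/val_inj/ffunP => k; apply/val_inj.
change (scoord j k = scoord (jump i l m) k); rewrite jump_coord //; have := dji k.
by rewrite /scoord; case: (k == m); case: (k == l) => /=; lia.
Qed.

Lemma sdiff_evecBC (i j : S) l m :
  (sdiff j i == evec m - evec l) = (sdiff i j == evec l - evec m).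
Proof.
by apply/eqP/eqP => /ffunP dji; apply/ffunP => k; have := dji k; rewrite !ffunE; lia.
Qed.

Lemma jumpK (i : S) l m : l != m -> (0 < scoord i l)%N -> jump (jump i l m) m l = i.
Proof.
move=> lm il; have ml : m != l by rewrite eq_sym.
have : sdiff (jump i l m) i == evec m - evec l by rewrite sdiff_evecB // il eqxx.
by rewrite sdiff_evecBC sdiff_evecB // => /andP[_ /eqP].
Qed.

Lemma sdiff_eq0 (i j : S) : (sdiff j i == 0) = (j == i).
Proof.
apply/eqP/eqP => [/ffunP dji|->]; last by apply/ffunP => k; rewrite !ffunE subrr.
apply/val_inj/ffunP => k; apply/val_inj/eqP.
by have := dji k; rewrite !ffunE => /eqP; rewrite subr_eq0 eqz_nat.
Qed.

End StateSpace.

Lemma evecB_neq0 (Sigma : finType) (l m : Sigma) : l != m -> evec m - evec l != 0.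
Proof.
move=> lm; apply/eqP => /ffunP /(_ m); rewrite !ffunE eqxx eq_sym (negbTE lm) /=; lia.
Qed.

Lemma evecB_inj (Sigma : finType) (l m l' m' : Sigma) : l != m ->
  (evec m - evec l == evec m' - evec l') = (l == l') && (m == m').
Proof.
move=> lm; apply/eqP/andP => [/ffunP e|[/eqP-> /eqP->] //].
move: (e l) (e m); rewrite !ffunE !eqxx /=; case: (eqVneq l m) lm => // _ _.
by case: (eqVneq l l'); case: (eqVneq l m'); case: (eqVneq m l'); case: (eqVneq m m');
  move=> //= *; lia.
Qed.

Section Jumps.
Variables (V : nmodType) (Sigma : finType) (N : nat).
Local Notation S := (stateS Sigma N).

Lemma sum_sdiff_evecB (i : S) l m (F : S -> V) : l != m ->
  \sum_(j | sdiff j i == evec m - evec l) F j =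
  if (0 < scoord i l)%N then F (jump i l m) else 0.
Proof.
move=> lm; under eq_bigl do rewrite sdiff_evecB //.
by case: ifP => il; [rewrite (big_pred1 (jump i l m))|rewrite big_pred0].
Qed.

(* [jump _ l m] is a bijection from the states with [0 < i_l] onto those with [0 < j_m]. *)
Lemma sum_jump l m (G : S -> V) : l != m ->
  \sum_i (if (0 < scoord i l)%N then G (jump i l m) else 0) =
  \sum_j (if (0 < scoord j m)%N then G j else 0).
Proof.
move=> lm.
transitivity (\sum_i \sum_j (if sdiff j i == evec m - evec l then G j else 0)).
  by apply: eq_bigr => i _; rewrite -big_mkcond sum_sdiff_evecB.
rewrite exchange_big; apply: eq_bigr => j _.
under eq_bigr do rewrite sdiff_evecBC.
by rewrite -big_mkcond (sum_sdiff_evecB j (fun=> G j)) // eq_sym.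
Qed.

End Jumps.

Section Generator.
Variables (R : realType) (Sigma : finType) (N : nat) (w : Sigma -> Sigma -> R).
Local Notation S := (stateS Sigma N).

Lemma Uk_evecB l m (z : Sigma -> R) : l != m -> Uk w (evec m - evec l) z = w l m * z l.
Proof.
move=> lm; rewrite /Uk (negbTE (evecB_neq0 lm)) (bigD1 l) //= [X in _ + X]big1 => [|l' l'l].
  rewrite addr0 (bigD1 m) /= ?lm ?eqxx // big1 ?addr0 // => m' /andP[/andP[_ +] mm'].
  by rewrite evecB_inj // eqxx eq_sym (negbTE mm').
by rewrite big_pred0 // => m'; rewrite evecB_inj // [l == _]eq_sym (negbTE l'l) andbF.
Qed.

Lemma Umat_mulr (i : S) (v : S -> R) :
  \sum_j Umat w i j * v j =
  \sum_l \sum_(m | l != m) w l m * sreal R i l * (v (jump i l m) - v i).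
Proof.
have sdiff_ii : sdiff i i = 0 by apply/eqP; rewrite sdiff_eq0.
pose off j := \sum_l \sum_(m | (l != m) && (sdiff j i == evec m - evec l)) w l m * sreal R i l.
have UmatE j : Umat w i j = (j == i)%:R * Umat w i i + off j.
  case: (eqVneq j i) => [->|ji]; last by rewrite mul0r add0r /Umat /Uk sdiff_eq0 (negbTE ji).
  rewrite mul1r /off big1 ?addr0 // => l _; rewrite big_pred0 // => m; rewrite sdiff_ii.
  by case: (eqVneq l m) => //= lm; rewrite eq_sym (negbTE (evecB_neq0 lm)).
have offE : \sum_j off j * v j = \sum_l \sum_(m | l != m) w l m * sreal R i l * v (jump i l m).
  under eq_bigr do rewrite big_distrl /=.
  rewrite exchange_big; apply: eq_bigr => l _.
  under eq_bigr do rewrite big_distrl /= big_mkcondr /=.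
  rewrite exchange_big; apply: eq_bigr => m lm.
  rewrite -big_mkcond /= sum_sdiff_evecB //.
  by case: posnP => // il; rewrite /sreal il mulr0 mul0r.
under eq_bigr do rewrite UmatE mulrDl.
rewrite big_split /= offE (bigD1 i) //= big1 => [|j /negbTE ->]; last by rewrite !mul0r.
rewrite eqxx mul1r addr0 /Umat /Uk sdiff_ii eqxx mulNr big_distrl /= addrC -sumrB.
apply: eq_bigr => l _; rewrite big_distrl /= -sumrB; apply: eq_bigr => m _.
by rewrite mulrBr.
Qed.

End Generator.

Section MultinomialTheorem.
Variables (R : numFieldType) (Sigma : finType) (K : nat).
Local Notation T := {ffun Sigma -> 'I_K.+1}.

Definition weight (f : T) := (\sum_l (f l : nat))%N.
Definition multicoef n (f : T) : R := (n`!)%:R / \prod_l ((f l)`!)%:R.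
Definition monomial (x : Sigma -> R) (f : T) : R := \prod_l x l ^+ f l.
Definition incr (f : T) l : T := [ffun k => inord (f k + (k == l))].
Definition decr (f : T) l : T := [ffun k => inord (f k - (k == l))].

Lemma incr_coord (f : T) l k : (f l < K)%N -> (incr f l k : nat) = (f k + (k == l))%N.
Proof.
move=> fl; rewrite ffunE inordK //.
by case: (eqVneq k l) => [->|_]; rewrite /= ?addn1 ?addn0.
Qed.

Lemma incr_coord_wrap (f : T) l : (K <= f l)%N -> (incr f l l : nat) = 0%N.
Proof. by move=> fl; rewrite ffunE /inord val_insubd eqxx addn1 ltnS ltnNge fl. Qed.

Lemma decr_coord (f : T) l k : (decr f l k : nat) = (f k - (k == l))%N.
Proof. by rewrite ffunE inordK // ltnS (leq_trans (leq_subr _ _)) // -ltnS. Qed.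

Lemma incrK (f : T) l : (f l < K)%N -> decr (incr f l) l = f.
Proof.
by move=> fl; apply/ffunP => k; apply/val_inj; rewrite /= decr_coord incr_coord // addnK.
Qed.

Lemma decrK (g : T) l : (0 < g l)%N -> incr (decr g l) l = g.
Proof.
move=> gl; have dl : (decr g l l < K)%N by rewrite decr_coord eqxx; have := ltn_ord (g l); lia.
apply/ffunP => k; apply/val_inj; rewrite /= incr_coord // decr_coord.
by case: (eqVneq k l) => [->|]; rewrite /=; lia.
Qed.

Lemma weight_incr (f : T) l : (f l < K)%N -> weight (incr f l) = (weight f).+1.
Proof.
move=> fl; rewrite /weight (eq_bigr _ (fun k _ => incr_coord k fl)) big_split /=.
by rewrite sum_nat_eq1 addn1.
Qed.

Lemma prod_fact_decr (g : T) l : (0 < g l)%N ->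
  \prod_k ((g k)`!)%:R = (g l)%:R * \prod_k ((decr g l k)`!)%:R :> R.
Proof.
move=> gl; rewrite (bigD1 l) //= [in RHS](bigD1 l) //= mulrA; congr (_ * _).
  by rewrite decr_coord eqxx subn1 -natrM -{1}(prednK gl) factS prednK.
by apply: eq_bigr => k /negbTE kl; rewrite decr_coord kl subn0.
Qed.

Lemma monomial_decr (x : Sigma -> R) (g : T) l : (0 < g l)%N ->
  monomial x g = x l * monomial x (decr g l).
Proof.
move=> gl; rewrite /monomial (bigD1 l) //= [in RHS](bigD1 l) //= mulrA; congr (_ * _).
  by rewrite decr_coord eqxx subn1 -exprS prednK.
by apply: eq_bigr => k /negbTE kl; rewrite decr_coord kl subn0.
Qed.

Lemma prod_fact_neq0 (f : T) : \prod_k ((f k)`!)%:R != 0 :> R.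
Proof. by apply/prodf_neq0 => k _; rewrite pnatr_eq0 -lt0n fact_gt0. Qed.

Lemma weight_eq0 (f : T) : (weight f == 0%N) = (f == [ffun=> ord0]).
Proof.
rewrite /weight sum_nat_eq0; apply/forallP/eqP => [f0|fE k]; last by rewrite fE ffunE.
by apply/ffunP => k; apply/val_inj; rewrite ffunE; apply/eqP/(implyP (f0 k)).
Qed.

Lemma multicoefS n (g : T) : weight g = n.+1 ->
  multicoef n.+1 g = \sum_(l | (0 < g l)%N) multicoef n (decr g l).
Proof.
move=> wg; have -> : multicoef n.+1 g = \sum_l (g l)%:R * multicoef n g.
  by rewrite -mulr_suml -natr_sum -/(weight g) wg /multicoef factS natrM mulrA.
rewrite [RHS]big_mkcond /=; apply: eq_bigr => l _.
case: posnP => [->|gl]; first by rewrite mul0r.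
rewrite /multicoef (prod_fact_decr gl).
have gl0 : (g l)%:R != 0 :> R by rewrite pnatr_eq0 -lt0n.
by field; rewrite prod_fact_neq0 gl0.
Qed.

Lemma multinomial_theorem (x : Sigma -> R) n : (n <= K)%N ->
  \sum_(f : T | weight f == n) multicoef n f * monomial x f = (\sum_l x l) ^+ n.
Proof.
elim: n => [_|n IHn nK].
  rewrite (big_pred1 [ffun=> ord0]) => [|f]; last exact: weight_eq0.
  by rewrite /multicoef /monomial expr0 !big1 ?divr1 ?mulr1 // => k _; rewrite ffunE.
rewrite exprSr -(IHn (ltnW nK)) big_distrl /=.
transitivity (\sum_(g : T | weight g == n.+1) \sum_(l | (0 < g l)%N)
   multicoef n (decr g l) * monomial x (decr g l) * x l).
  apply: eq_bigr => g /eqP wg; rewrite multicoefS // mulr_suml.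
  by apply: eq_bigr => l gl; rewrite (monomial_decr x gl) mulrA mulrAC.
under [RHS]eq_bigr do rewrite mulr_sumr.
rewrite (exchange_big_dep xpredT) //= [RHS]exchange_big; apply: eq_bigr => l _ /=.
rewrite (reindex_onto (incr^~ l) (decr^~ l)) => [|g /andP[_]]; last exact: decrK.
apply: eq_big => [f|f /andP[_ /eqP -> //]].
case: (ltnP (f l) K) => fl.
  by rewrite weight_incr // incrK // eqxx andbT incr_coord // eqxx addn1 eqSS andbT.
have le_weight : (f l <= weight f)%N by rewrite /weight (bigD1 l) //= leq_addr.
by rewrite incr_coord_wrap ?andbF //; apply/esym/negbTE/eqP => wf; lia.
Qed.

Lemma multicoef_gt0 n (f : T) : 0 < multicoef n f.
Proof. by rewrite divr_gt0 ?ltr0n ?fact_gt0 // prodr_gt0 // => k _; rewrite ltr0n fact_gt0. Qed.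

Lemma monomial_gt0 (x : Sigma -> R) (f : T) : (forall k, 0 < x k) -> 0 < monomial x f.
Proof. by move=> xpos; apply: prodr_gt0 => k _; exact: exprn_gt0. Qed.

End MultinomialTheorem.

Section Multinomial.
Variables (R : realType) (Sigma : finType) (N : nat).
Local Notation S := (stateS Sigma N).

Lemma sum_stateS (F : {ffun Sigma -> 'I_N.+1} -> R) :
  \sum_(i : S) F (val i) = \sum_(f | weight f == N) F f.
Proof.
rewrite [RHS](reindex_omap (val : S -> _) insub) => [|f fN]; last by rewrite insubT.
by apply: eq_bigl => i; rewrite (valP i) valK eqxx.
Qed.

Lemma multinomialE (p : Sigma -> R) (i : S) :
  multinomial p i = multicoef R N (val i) * monomial p (val i).
Proof. by []. Qed.

Lemma decr_jump (i : S) l m : l != m -> (0 < scoord i l)%N ->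
  decr (val (jump i l m)) m = decr (val i) l.
Proof.
move=> lm il; apply/ffunP => k; apply/val_inj; rewrite /= !decr_coord.
have := jump_coord k lm il; rewrite /scoord => ->.
by case: (eqVneq k l) => [->|]; rewrite ?(negbTE lm) /=; case: (k == m) => /=; lia.
Qed.

Lemma monomial_jump (a : Sigma -> R) (i : S) l m : l != m -> (0 < scoord i l)%N ->
  a l != 0 -> monomial a (val (jump i l m)) = monomial a (val i) * (a m / a l).
Proof.
move=> lm il al; have jm : (0 < val (jump i l m) m)%N.
  by have := jump_coord_to lm il; rewrite /scoord => ->.
by rewrite (monomial_decr a jm) (monomial_decr a il) decr_jump //; field.
Qed.

Lemma multinomial_jump (p : Sigma -> R) (i : S) l m : l != m -> (0 < scoord i l)%N ->
  p l != 0 ->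
  multinomial p (jump i l m) * sreal R (jump i l m) m =
  multinomial p i * sreal R i l * (p m / p l).
Proof.
move=> lm il pl; have jm : (0 < val (jump i l m) m)%N.
  by have := jump_coord_to lm il; rewrite /scoord => ->.
rewrite !multinomialE /multicoef /sreal /scoord (prod_fact_decr R jm) (monomial_decr p jm).
rewrite (prod_fact_decr R il) (monomial_decr p il) decr_jump //.
have il0 : (val i l)%:R != 0 :> R by rewrite pnatr_eq0 -lt0n.
have jm0 : (val (jump i l m) m)%:R != 0 :> R by rewrite pnatr_eq0 -lt0n.
by field; rewrite prod_fact_neq0 il0 jm0 pl.
Qed.

Lemma multinomial_gt0 (p : Sigma -> R) (i : S) : (forall k, 0 < p k) -> 0 < multinomial p i.
Proof. by move=> ppos; rewrite multinomialE mulr_gt0 ?multicoef_gt0 ?monomial_gt0. Qed.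

Lemma multinomial_sum1 (p : Sigma -> R) : \sum_l p l = 1 -> \sum_(i : S) multinomial p i = 1.
Proof.
move=> p1; rewrite (sum_stateS (fun f => multicoef R N f * monomial p f)).
by rewrite multinomial_theorem // p1 expr1n.
Qed.

Lemma sum_sreal (i : S) : \sum_l sreal R i l = N%:R.
Proof. by rewrite -natr_sum sum_scoord. Qed.

Lemma multinomial_mean (p : Sigma -> R) m : \sum_l p l = 1 -> (forall k, 0 < p k) ->
  \sum_(i : S) multinomial p i * sreal R i m = N%:R * p m.
Proof.
move=> p1 ppos; pose E k := \sum_(i : S) multinomial p i * sreal R i k.
have balance l : E m * p l = E l * p m.
  case: (eqVneq l m) => [->//|lm]; have pl : p l != 0 by rewrite gt_eqF.
  pose G (j : S) := multinomial p j * sreal R j m.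
  have from_l : \sum_i (if (0 < scoord i l)%N then G (jump i l m) else 0) = E l * (p m / p l).
    rewrite /E mulr_suml; apply: eq_bigr => i _; case: posnP => [il|il].
      by rewrite /sreal il mulr0 mul0r.
    by rewrite /G multinomial_jump.
  have to_m : \sum_j (if (0 < scoord j m)%N then G j else 0) = E m.
    by apply: eq_bigr => j _; case: posnP => // jm; rewrite /G /sreal jm mulr0.
  by rewrite -to_m -(sum_jump G lm) from_l mulrA divfK.
have sumE : \sum_l E l = N%:R.
  rewrite /E exchange_big /=.
  under eq_bigr do rewrite -mulr_sumr sum_sreal.
  by rewrite -mulr_suml multinomial_sum1 // mul1r.
rewrite -/(E m) -sumE -[E m]mulr1 -p1 !mulr_sumr mulr_suml.
by apply: eq_bigr => l _; rewrite balance.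
Qed.

End Multinomial.

Lemma sum_offdiag_half (R : numFieldType) (Sigma : finType) (F : Sigma -> Sigma -> R) :
  \sum_l \sum_(m | l != m) F l m = 2^-1 * \sum_l \sum_(m | l != m) (F l m + F m l).
Proof.
have swap : \sum_l \sum_(m | l != m) F m l = \sum_l \sum_(m | l != m) F l m.
  rewrite (exchange_big_dep xpredT) //=; apply: eq_bigr => l _.
  by apply: eq_bigl => m; rewrite eq_sym.
under [in RHS]eq_bigr do rewrite big_split /=.
by rewrite big_split /= swap; field.
Qed.

(* AM-GM for [a x] and [b / x]. *)
Lemma amgm_ratio (R : rcfType) (a b x : R) : 0 <= a -> 0 <= b -> 0 < x ->
  a * (1 - x) + b * (1 - x^-1) <= (Num.sqrt a - Num.sqrt b) ^+ 2.
Proof.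
move=> a0 b0 x0; have sx0 : Num.sqrt x != 0 by rewrite gt_eqF ?sqrtr_gt0.
have -> : a * (1 - x) + b * (1 - x^-1) = (Num.sqrt a - Num.sqrt b) ^+ 2
    - (Num.sqrt a * Num.sqrt x - Num.sqrt b / Num.sqrt x) ^+ 2.
  rewrite -{1}(sqr_sqrtr a0) -{1}(sqr_sqrtr b0) -{1 2}(sqr_sqrtr (ltW x0)).
  by field.
by rewrite gerBl sqr_ge0.
Qed.

Section DonskerVaradhan.
Variables (R : realType) (Sigma : finType) (N : nat) (w : Sigma -> Sigma -> R).
Hypothesis w_ge0 : forall l m, l != m -> 0 <= w l m.
Local Notation S := (stateS Sigma N).

Definition IUval (nu v : S -> R) : R := - \sum_i nu i * (\sum_j Umat w i j * v j) / v i.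

Lemma IUval_le_IU (nu v : S -> R) : (forall i, 0 < v i) -> ((IUval nu v)%:E <= IU w nu)%E.
Proof. by move=> vpos; apply: ereal_sup_ubound; exists v. Qed.

Lemma IUvalE (nu v : S -> R) : (forall i, 0 < v i) ->
  IUval nu v = \sum_l \sum_(m | l != m)
    \sum_i nu i * (w l m * sreal R i l * (1 - v (jump i l m) / v i)).
Proof.
move=> vpos; rewrite /IUval -sumrN.
transitivity (\sum_i \sum_l \sum_(m | l != m)
    nu i * (w l m * sreal R i l * (1 - v (jump i l m) / v i))); last first.
  by rewrite exchange_big; apply: eq_bigr => l _; rewrite exchange_big.
apply: eq_bigr => i _; have vi0 : v i != 0 by rewrite gt_eqF.
rewrite Umat_mulr -mulrA -mulrN mulr_suml -sumrN mulr_sumr; apply: eq_bigr => l _.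
rewrite mulr_suml -sumrN mulr_sumr; apply: eq_bigr => m _.
by congr (_ * _); field.
Qed.

Definition rate (z : Sigma -> R) : R :=
  2^-1 * \sum_l \sum_(m | l != m) (Num.sqrt (w l m * z l) - Num.sqrt (w m l * z m)) ^+ 2.

Lemma closed_formE (r z : Sigma -> R) : closed_form w r z = Rlin r z - rate z.
Proof.
rewrite /closed_form /rate; congr (_ - _ * _); apply: eq_bigr => l _.
by apply: eq_bigr => m lm; rewrite !Uk_evecB // eq_sym.
Qed.

Lemma rateE (z : Sigma -> R) : (forall k, 0 <= z k) ->
  rate z = \sum_l \sum_(m | l != m)
    (w l m * z l - Num.sqrt (w l m * z l) * Num.sqrt (w m l * z m)).
Proof.
move=> z0; rewrite sum_offdiag_half /rate; congr (_ * _); apply: eq_bigr => l _.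
apply: eq_bigr => m lm; have ml : m != l by rewrite eq_sym.
rewrite sqrrB !sqr_sqrtr ?mulr_ge0 ?w_ge0 //; ring.
Qed.

End DonskerVaradhan.

Section LowerBound.
Variables (R : realType) (Sigma : finType) (N : nat) (w : Sigma -> Sigma -> R).
Variables (gamma z : Sigma -> R).
Hypotheses (w_ge0 : forall l m, l != m -> 0 <= w l m) (gamma_gt0 : forall k, 0 < gamma k).
Hypotheses (rev : reversible w gamma) (z_gt0 : forall k, 0 < z k).
Local Notation S := (stateS Sigma N).

Let a k := Num.sqrt (z k / gamma k).

Let a_gt0 k : 0 < a k.
Proof. by rewrite sqrtr_gt0 divr_gt0. Qed.

Lemma reversible_flux l m : l != m ->
  w l m * z l * (a m / a l) = Num.sqrt (w l m * z l) * Num.sqrt (w m l * z m).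
Proof.
move=> lm; have wz_ge0 k k' : k != k' -> 0 <= w k k' * z k.
  by move=> kk'; rewrite mulr_ge0 ?w_ge0 ?ltW.
have flux_ge0 : 0 <= w l m * z l * (a m / a l) by rewrite mulr_ge0 ?wz_ge0 ?divr_ge0 ?ltW.
rewrite -sqrtrM ?wz_ge0 // -(ger0_norm flux_ge0) -sqrtr_sqr; congr Num.sqrt.
have wml : w m l = gamma l * w l m / gamma m by rewrite rev mulrC mulKf ?gt_eqF.
rewrite exprMn expr_div_n /a !sqr_sqrtr ?divr_ge0 ?ltW // wml.
by field; rewrite !gt_eqF.
Qed.

Lemma rate_le_IU (nu : S -> R) : meanS nu = z -> ((rate w z)%:E <= IU w nu)%E.
Proof.
move=> mean_nu; pose v (i : S) := monomial a (val i).
have v_gt0 i : 0 < v i by exact: monomial_gt0.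
apply: le_trans (IUval_le_IU w nu v_gt0); suff -> : IUval w nu v = rate w z by [].
rewrite IUvalE // (rateE w_ge0) => [|k]; last exact: ltW.
apply: eq_bigr => l _; apply: eq_bigr => m lm.
rewrite -reversible_flux //.
have -> : z l = \sum_i nu i * sreal R i l by rewrite -mean_nu.
transitivity (\sum_i nu i * sreal R i l * (w l m * (1 - a m / a l)));
  last by rewrite -mulr_suml; ring.
apply: eq_bigr => i _; case: (posnP (scoord i l)) => il.
  by rewrite /sreal il !(mulr0, mul0r).
have vi0 : v i != 0 by rewrite gt_eqF.
by rewrite /v monomial_jump ?gt_eqF // -/(v i) [v i * _]mulrC mulfK //; ring.
Qed.

End LowerBound.

Section UpperBound.
Variables (R : realType) (Sigma : finType) (N : nat) (w : Sigma -> Sigma -> R).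
Variable p : Sigma -> R.
Hypothesis w_ge0 : forall l m, l != m -> 0 <= w l m.
Hypotheses (p_gt0 : forall k, 0 < p k) (p_sum1 : \sum_l p l = 1).
Local Notation S := (stateS Sigma N).
Local Notation nu := (@multinomial R Sigma N p).
Local Notation z := (fun l => N%:R * p l).

Definition jump_flux (v : S -> R) l m :=
  \sum_i nu i * (w l m * sreal R i l * (1 - v (jump i l m) / v i)).

Lemma jump_flux_pair (v : S -> R) l m : (forall i, 0 < v i) -> l != m ->
  jump_flux v l m + jump_flux v m l <= (Num.sqrt (w l m * z l) - Num.sqrt (w m l * z m)) ^+ 2.
Proof.
move=> v_gt0 lm; have pl0 : p l != 0 by rewrite gt_eqF.
pose G (j : S) := nu j * (w m l * sreal R j m * (1 - v (jump j m l) / v j)).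
have flux_ml : jump_flux v m l = \sum_i (if (0 < scoord i l)%N then G (jump i l m) else 0).
  rewrite (sum_jump G lm); apply: eq_bigr => j _; case: posnP => // jm.
  by rewrite /G /sreal jm !(mulr0, mul0r).
pose b := w m l * (p m / p l).
have b_ge0 : 0 <= b by rewrite mulr_ge0 ?w_ge0 1?eq_sym // divr_ge0 ?ltW.
have gap : (Num.sqrt (w l m * z l) - Num.sqrt (w m l * z m)) ^+ 2 =
    \sum_i nu i * sreal R i l * (Num.sqrt (w l m) - Num.sqrt b) ^+ 2.
  rewrite -mulr_suml multinomial_mean //.
  have -> : w m l * (N%:R * p m) = b * (N%:R * p l) by rewrite /b; field.
  rewrite (sqrtrM _ (w_ge0 lm)) (sqrtrM _ b_ge0) -mulrBl exprMn sqr_sqrtr ?mulr_ge0 ?ler0n ?ltW //.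
  by rewrite mulrC.
rewrite flux_ml /jump_flux -big_split gap /=; apply: ler_sum => i _.
case: posnP => il; first by rewrite /sreal il !(mulr0, mul0r, addr0).
pose x := v (jump i l m) / v i; have x_gt0 : 0 < x by rewrite divr_gt0.
have c_ge0 : 0 <= nu i * sreal R i l by rewrite mulr_ge0 ?ler0n // ltW // multinomial_gt0.
have G_jump : G (jump i l m) = nu i * sreal R i l * (b * (1 - x^-1)).
  rewrite /G jumpK // /x invf_div; transitivity (multinomial p (jump i l m) *
    sreal R (jump i l m) m * (w m l * (1 - v i / v (jump i l m)))); first by ring.
  by rewrite multinomial_jump // /b; ring.
rewrite G_jump -/x (_ : _ + _ = nu i * sreal R i l * (w l m * (1 - x) + b * (1 - x^-1))).
  by apply: ler_wpM2l => //; exact: amgm_ratio (w_ge0 lm) b_ge0 x_gt0.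
by ring.
Qed.

Lemma IU_multinomial_le : (IU w nu <= (rate w z)%:E)%E.
Proof.
apply: ge_ereal_sup => _ [v v_gt0 <-]; rewrite lee_fin.
rewrite -/(IUval w nu v) IUvalE // sum_offdiag_half /rate.
apply: ler_wpM2l; first by rewrite invr_ge0 ler0n.
by apply: ler_sum => l _; apply: ler_sum => m lm; exact: jump_flux_pair.
Qed.

End UpperBound.

Lemma reversible_irreducible_gt0 (R : realType) (Sigma : finType)
    (w : Sigma -> Sigma -> R) (gamma : Sigma -> R) :
  irreducible w -> distribution gamma -> reversible w gamma -> forall l, 0 < gamma l.
Proof.
move=> irr [gamma_ge0 gamma_sum1] rev l; rewrite lt_def gamma_ge0 andbT.
apply: contra_eqN gamma_sum1 => /eqP gamma_l0; rewrite big1 ?(eq_sym 0) ?oner_eq0 // => k _.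
move: gamma_l0; have /connectP[s path_s ->] := irr k l.
elim: s k path_s => //= j s IHs k /andP[/andP[_ wkj] path_s] /(IHs j path_s) gamma_j0.
by move/eqP: (rev k j); rewrite gamma_j0 mul0r mulf_eq0 (gt_eqF wkj) orbF => /eqP.
Qed.

Lemma Rlin_mean (R : realType) (Sigma : finType) (N : nat) (r z : Sigma -> R)
    (nu : stateS Sigma N -> R) :
  meanS nu = z -> \sum_i nu i * Rlin r (sreal R i) = Rlin r z.
Proof.
move=> <-; rewrite /Rlin /meanS; under eq_bigr do rewrite mulr_sumr.
rewrite exchange_big; apply: eq_bigr => l _; rewrite mulr_sumr.
by apply: eq_bigr => i _; ring.
Qed.

Theorem theorem2 (R : realType) (Sigma : finType) (N : nat)
  (w : Sigma -> Sigma -> R) (gamma : Sigma -> R) (r : Sigma -> R) :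
  (1 <= N)%N ->
  generator w -> irreducible w -> distribution gamma -> reversible w gamma ->
  forall z : Sigma -> R,
    (forall l, 0 < z l) -> \sum_l z l = N%:R ->
    let nuz := @multinomial R Sigma N (fun l => z l / N%:R) in
    [/\ Lambda w r N z = (closed_form w r z)%:E,
        objective w r nuz = (closed_form w r z)%:E,
        probS nuz & meanS nuz = z].
Proof.
move=> N_gt0 [w_ge0 _] irr dist rev z z_gt0 z_sum nuz.
have N0 : N%:R != 0 :> R by rewrite pnatr_eq0 -lt0n.
have p_gt0 l : 0 < z l / N%:R by rewrite divr_gt0 ?ltr0n.
have p_sum1 : \sum_l z l / N%:R = 1 by rewrite -mulr_suml z_sum divff.
have Np : (fun l => N%:R * (z l / N%:R)) = z by apply/funext => l; rewrite mulrC divfK.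
have mean : meanS nuz = z by rewrite -[in RHS]Np; apply/funext => l; exact: multinomial_mean.
have rate_le := rate_le_IU w_ge0 (reversible_irreducible_gt0 irr dist rev) rev z_gt0.
have objectiveE nu : meanS nu = z -> objective w r nu = ((Rlin r z)%:E - IU w nu)%E.
  by move=> mean_nu; rewrite /objective (Rlin_mean _ mean_nu).
have IU_nuz : IU w nuz = (rate w z)%:E.
  have := IU_multinomial_le N w_ge0 p_gt0 p_sum1; rewrite /= Np => IU_le.
  by apply/le_anti; rewrite rate_le // IU_le.
have obj_nuz : objective w r nuz = (closed_form w r z)%:E.
  by rewrite objectiveE // IU_nuz closed_formE EFinB.
have prob : probS nuz.
  by split=> [i|]; [exact: ltW (multinomial_gt0 _ p_gt0) | exact: multinomial_sum1].
split=> //; apply/le_anti/andP; split; last by apply: ereal_sup_ubound; exists nuz.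
apply: ge_ereal_sup => _ [nu [_ mean_nu] <-].
by rewrite objectiveE // closed_formE EFinB leeB // rate_le.
Qed.
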